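(* Let $(S,T)$ be bivariate normal with standard normal margins and correlation $\rho\in(-1,1)$, and let $A = \sqrt{2\pi}\,S$, $B = \sqrt{2\pi}\,T$. Then $\mathbb E[\max(A,0)] = \mathbb E[\max(B,0)] = 1$ and for $(x,y)\in[0,\infty)^2$ with $x+y>0$, \[ \mathbb E[\max(xA, yB, 0)] = \frac12(x+y)\Biggl(1 + \sqrt{1 - 2(\rho+1)\frac{xy}{(x+y)^2}}\Biggr). \] Equivalently the Pickands function $D_\rho(t) = \ell_\rho(1-t,t)$ equals $\frac12\{1 + \sqrt{1 - 2(\rho+1)t(1-t)}\}$, $t\in[0,1]$. *)

From Stdlib Require Import Reals Lra.
Open Scope R_scope.

Definition phi2 (rho s t : R) : R :=
  / (2 * PI * sqrt (1 - rho ^ 2)) *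
  exp (- (s ^ 2 - 2 * rho * s * t + t ^ 2) / (2 * (1 - rho ^ 2))).

Definition improper_int (f : R -> R) (l : R) : Prop :=
  forall eps, 0 < eps -> exists M, forall a b, a <= - M -> M <= b ->
    exists pr : Riemann_integrable f a b, Rabs (RiemannInt pr - l) < eps.

(* bvn_expect rho g v : E[g(S,T)] = v, for (S,T) bivariate standard normal
   with correlation rho, computed as the iterated improper integral
   int ( int g(s,t) phi2(s,t) dt ) ds  (for nonnegative continuous g this
   coincides with the Lebesgue expectation, by Tonelli). *)
Definition bvn_expect (rho : R) (g : R -> R -> R) (v : R) : Prop :=
  exists F : R -> R,
    (forall s, improper_int (fun t => g s t * phi2 rho s t) (F s)) /\
    improper_int F v.

From Coquelicot Require Import Coquelicot.
From Stdlib Require Import Reals Lra FunctionalExtensionality.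
Open Scope R_scope.

(* Proof plan.
   1. The Gaussian integral, by Feynman's trick: gauss_int x = int_0^x e^{-u^2/2}
      and feynman x = int_0^1 e^{-x^2(1+t^2)/2}/(1+t^2) satisfy
      gauss_int^2 + 2 feynman = PI/2, whence gauss_int -> sqrt(2 PI)/2.  This gives
      the standard normal density phi and distribution function Phi with their
      limits at +-oo.
   2. Every integral over R is computed from explicit antiderivatives on two
      half-lines (improper_int_antiderivatives).
   3. Inner integrals: phi2(s, t) = phi(s) phi((t - rho s)/sig)/sig, so the integral
      in t of max(c, b t) phi2(s, t) is an explicit expression cond_max in Phi, phi.
   4. Outer integrals: on each half-line s <= 0, s >= 0 the result is of the form
      phi(s) (al s Phi(k s) + be s + ta phi(k s)) ("owen"), which has an explicit
      antiderivative since phi(s) phi(k s) = phi(sqrt(1+k^2) s)/sqrt(2 PI).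
   5. Collecting the constants gives E[max(a S, b T, 0)] = (a + b + sqrt(qform))/(2 sqrt(2 PI));
      the theorem is the rescaling a = sqrt(2 PI) x, b = sqrt(2 PI) y. *)

(* Coquelicot's integration and continuity lemmas are stated for an arbitrary
   normed module, which unification cannot infer from a real-valued function;
   these are their instances at [R]. *)
Lemma ex_RInt_continuous_R (f : R -> R) a b :
  (forall z, Rmin a b <= z <= Rmax a b -> continuous f z) -> ex_RInt f a b.
Proof. apply (ex_RInt_continuous (V := R_CompleteNormedModule)). Qed.

Lemma ex_derive_continuous_R (f : R -> R) x : ex_derive f x -> continuous f x.
Proof. apply (ex_derive_continuous (K := R_AbsRing) (V := R_NormedModule)). Qed.

Lemma is_RInt_unique_R (f : R -> R) a b l : is_RInt f a b l -> RInt f a b = l.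
Proof. apply (is_RInt_unique (V := R_CompleteNormedModule)). Qed.

Lemma RInt_scal_R (f : R -> R) k a b :
  ex_RInt f a b -> RInt (fun t => k * f t) a b = k * RInt f a b.
Proof. apply (RInt_scal (V := R_CompleteNormedModule)). Qed.

Lemma RInt_comp_lin_R (f : R -> R) u v a b :
  ex_RInt f (u * a + v) (u * b + v) ->
  RInt (fun y => u * f (u * y + v)) a b = RInt f (u * a + v) (u * b + v).
Proof. apply (RInt_comp_lin (V := R_CompleteNormedModule)). Qed.

Lemma RInt_const_R (c a b : R) : RInt (fun _ => c) a b = (b - a) * c.
Proof. apply (RInt_const (V := R_CompleteNormedModule)). Qed.

(* Equalities produced by Coquelicot's generic lemmas live in a structure
   whose carrier is [R]; restate them in [R] so that [ring]/[field] apply. *)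
Ltac to_R_eq := match goal with |- ?a = ?b => change (@eq R a b) end.

Lemma is_RInt_derive_R (F f : R -> R) a b :
  (forall x, is_derive F x (f x)) -> (forall x, continuous f x) ->
  is_RInt f a b (F b - F a).
Proof.
  intros dF cf. apply (is_RInt_derive (V := R_CompleteNormedModule)); auto.
Qed.

Lemma is_lim_comp_p (f g : R -> R) x l :
  is_lim f p_infty l -> is_lim g x p_infty -> is_lim (fun y => f (g y)) x l.
Proof.
  intros hf hg. apply is_lim_comp with p_infty; auto.
  destruct x as [x| |]; [exists posreal_one | exists 0 | exists 0];
    intros; discriminate.
Qed.

Lemma is_lim_comp_m (f g : R -> R) x l :
  is_lim f m_infty l -> is_lim g x m_infty -> is_lim (fun y => f (g y)) x l.
Proof.
  intros hf hg. apply is_lim_comp with m_infty; auto.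
  destruct x as [x| |]; [exists posreal_one | exists 0 | exists 0];
    intros; discriminate.
Qed.

Lemma is_lim_comp_opp (f : R -> R) (l : R) :
  is_lim f p_infty l -> is_lim (fun y => f (- y)) m_infty l.
Proof.
  intros hf. apply (is_lim_comp_p f). auto.
  apply (is_lim_opp (fun y => y) m_infty m_infty), is_lim_id.
Qed.

Lemma is_lim_affine_p (k d : R) :
  0 < k -> is_lim (fun y => k * y + d) p_infty p_infty.
Proof.
  intros hk. apply is_lim_spec. intros M. exists ((M - d) / k). intros y hy.
  apply (Rmult_lt_compat_l k) in hy; auto.
  replace (k * ((M - d) / k)) with (M - d) in hy by (field; lra). lra.
Qed.

Lemma is_lim_affine_m (k d : R) :
  0 < k -> is_lim (fun y => k * y + d) m_infty m_infty.
Proof.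
  intros hk. apply is_lim_spec. intros M. exists ((M - d) / k). intros y hy.
  apply (Rmult_lt_compat_l k) in hy; auto.
  replace (k * ((M - d) / k)) with (M - d) in hy by (field; lra). lra.
Qed.

Lemma is_lim_scal (f : R -> R) (a : R) x (l : R) :
  is_lim f x l -> is_lim (fun y => a * f y) x (a * l).
Proof. exact (is_lim_scal_l f a x l). Qed.

Lemma is_lim_mult_bounded (f g : R -> R) x :
  is_lim f x 0 -> (forall y, Rabs (g y) <= 1) -> is_lim (fun y => f y * g y) x 0.
Proof.
  intros hf hg.
  assert (habs : is_lim (fun y => Rabs (f y)) x 0).
  { replace (Finite 0) with (Rbar_abs 0) by (simpl; now rewrite Rabs_R0).
    now apply is_lim_Rabs. }
  apply (is_lim_le_le_loc (fun y => - Rabs (f y)) (fun y => Rabs (f y))).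
  - apply filter_forall. intros y.
    apply Rabs_le_between. rewrite Rabs_mult.
    assert (h := Rmult_le_compat_l _ _ _ (Rabs_pos (f y)) (hg y)).
    now rewrite Rmult_1_r in h.
  - replace (Finite 0) with (Rbar_opp 0) by (simpl; f_equal; ring).
    now apply is_lim_opp.
  - exact habs.
Qed.

Definition gauss (x : R) : R := exp (- (x ^ 2) / 2).

Definition gauss_int (x : R) : R := RInt gauss 0 x.

Definition feynman_integrand (x t : R) : R :=
  exp (- (x ^ 2 * (1 + t ^ 2)) / 2) / (1 + t ^ 2).

Definition feynman (x : R) : R := RInt (feynman_integrand x) 0 1.

Lemma gauss_pos (x : R) : 0 < gauss x.
Proof. apply exp_pos. Qed.

Lemma gauss_continuous (x : R) : continuous gauss x.
Proof. apply ex_derive_continuous_R. unfold gauss. auto_derive. trivial. Qed.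

Lemma ex_RInt_gauss (a b : R) : ex_RInt gauss a b.
Proof. apply ex_RInt_continuous_R. intros; apply gauss_continuous. Qed.

Lemma gauss_int_derive (x : R) : is_derive gauss_int x (gauss x).
Proof.
  apply (is_derive_RInt gauss gauss_int 0 x).
  - apply filter_forall. intros y. apply (RInt_correct (V := R_CompleteNormedModule)).
    apply ex_RInt_gauss.
  - apply gauss_continuous.
Qed.

Lemma gauss_int_0 : gauss_int 0 = 0.
Proof. apply (RInt_point (V := R_CompleteNormedModule)). Qed.

Lemma gauss_int_nonneg (x : R) : 0 <= x -> 0 <= gauss_int x.
Proof.
  intros hx. apply RInt_ge_0; auto using ex_RInt_gauss.
  intros; apply Rlt_le, gauss_pos.
Qed.

(* [gauss] is even, so its primitive vanishing at 0 is odd. *)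
Lemma gauss_int_opp (x : R) : gauss_int (- x) = - gauss_int x.
Proof.
  unfold gauss_int.
  replace (RInt gauss 0 (- x)) with (RInt gauss (-1 * 0 + 0) (-1 * x + 0)) by (f_equal; ring).
  rewrite <- RInt_comp_lin_R by apply ex_RInt_gauss.
  rewrite (RInt_ext _ (fun y => -1 * gauss y)).
  - rewrite RInt_scal_R by apply ex_RInt_gauss. ring.
  - intros y _. unfold gauss. do 3 f_equal. ring.
Qed.

Lemma one_plus_sq_pos (t : R) : 0 < 1 + t ^ 2.
Proof. nra. Qed.

Lemma feynman_integrand_continuous (x t : R) : continuous (feynman_integrand x) t.
Proof.
  apply ex_derive_continuous_R. unfold feynman_integrand. auto_derive.
  generalize (one_plus_sq_pos t). lra.
Qed.

Lemma feynman_integrand_derive (u t : R) :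
  is_derive (fun x => feynman_integrand x t) u (- u * exp (- (u ^ 2 * (1 + t ^ 2)) / 2)).
Proof.
  unfold feynman_integrand. auto_derive; auto.
  simpl. unfold Rdiv. field. generalize (one_plus_sq_pos t). simpl. lra.
Qed.

Lemma Derive_feynman_integrand (u t : R) :
  Derive (fun x => feynman_integrand x t) u = - u * exp (- (u ^ 2 * (1 + t ^ 2)) / 2).
Proof. apply is_derive_unique, feynman_integrand_derive. Qed.

(* Joint continuity of the x-derivative, needed to differentiate under the
   integral sign. *)
Lemma feynman_derivative_continuous (u t : R) :
  continuity_2d_pt (fun x t => Derive (fun x => feynman_integrand x t) x) u t.
Proof.
  apply continuity_2d_pt_ext with (fun x t => - x * exp (- (x ^ 2 * (1 + t ^ 2)) / 2)).
  { intros x y. symmetry. apply Derive_feynman_integrand. }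
  assert (hsq1 : continuity_2d_pt (fun x _ => x ^ 2) u t).
  { simpl. apply continuity_2d_pt_mult; [apply continuity_2d_pt_id1|].
    apply continuity_2d_pt_mult; [apply continuity_2d_pt_id1 | apply continuity_2d_pt_const]. }
  assert (hsq2 : continuity_2d_pt (fun _ y => y ^ 2) u t).
  { simpl. apply continuity_2d_pt_mult; [apply continuity_2d_pt_id2|].
    apply continuity_2d_pt_mult; [apply continuity_2d_pt_id2 | apply continuity_2d_pt_const]. }
  apply continuity_2d_pt_mult.
  - apply continuity_2d_pt_opp, continuity_2d_pt_id1.
  - apply continuity_1d_2d_pt_comp.
    + apply derivable_continuous_pt, derivable_pt_exp.
    + apply continuity_2d_pt_mult; [| apply continuity_2d_pt_const].
      apply continuity_2d_pt_opp, continuity_2d_pt_mult; auto.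
      apply continuity_2d_pt_plus; auto using continuity_2d_pt_const.
Qed.

(* Feynman's trick: differentiating under the integral sign and substituting
   t -> x t gives  feynman' = - gauss * gauss_int. *)
Lemma feynman_derive (x : R) : is_derive feynman x (- gauss x * gauss_int x).
Proof.
  unfold feynman.
  replace (- gauss x * gauss_int x) with
    (RInt (fun t => Derive (fun u => feynman_integrand u t) x) 0 1).
  - apply is_derive_RInt_param.
    + apply filter_forall. intros y t _. eexists. apply feynman_integrand_derive.
    + intros t _. apply feynman_derivative_continuous.
    + apply filter_forall. intros y.
      apply ex_RInt_continuous_R. intros; apply feynman_integrand_continuous.
  - rewrite (RInt_ext _ (fun t => - gauss x * (x * gauss (x * t + 0)))).
    + rewrite RInt_scal_R, RInt_comp_lin_R.
      * unfold gauss_int. do 3 f_equal; ring.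
      * apply ex_RInt_gauss.
      * apply ex_RInt_continuous_R. intros. apply ex_derive_continuous_R.
        unfold gauss. auto_derive. trivial.
    + intros t _. rewrite Derive_feynman_integrand.
      unfold gauss.
      replace (- (x ^ 2 * (1 + t ^ 2)) / 2) with (- (x ^ 2) / 2 + - ((x * t + 0) ^ 2) / 2)
        by field.
      rewrite exp_plus. to_R_eq. ring.
Qed.

(* The function  gauss_int^2 + 2 feynman  has zero derivative; at 0 it equals
   2 atan 1 = PI / 2. *)
Lemma feynman_identity (x : R) : gauss_int x ^ 2 + 2 * feynman x = PI / 2.
Proof.
  set (F := fun x => gauss_int x ^ 2 + 2 * feynman x).
  assert (hF : forall x, is_derive F x 0).
  { intros y. unfold F. auto_derive.
    - split; [|split]; [eexists; apply gauss_int_derive | eexists; apply feynman_derive | exact I].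
    - replace (Derive (fun x => gauss_int x) y) with (gauss y)
        by (symmetry; apply is_derive_unique, gauss_int_derive).
      replace (Derive (fun x => feynman x) y) with (- gauss y * gauss_int y)
        by (symmetry; apply is_derive_unique, feynman_derive).
      ring. }
  assert (hconst : F x = F 0).
  { assert (h := is_RInt_derive_R F (fun _ => 0) 0 x hF (continuous_const 0)).
    apply is_RInt_unique_R in h. rewrite RInt_const_R in h. lra. }
  change (F x = PI / 2). rewrite hconst. unfold F.
  replace (feynman 0) with (atan 1 - atan 0).
  { rewrite gauss_int_0, atan_1, atan_0. field. }
  symmetry. apply is_RInt_unique_R.
  apply is_RInt_ext with (fun t => / (1 + t ^ 2)).
  - intros t _. unfold feynman_integrand.
    replace (- (0 ^ 2 * (1 + t ^ 2)) / 2) with 0 by field.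
    rewrite exp_0. to_R_eq. unfold Rdiv. ring.
  - apply is_RInt_derive_R.
    + intros t. apply is_derive_Reals, derivable_pt_lim_atan.
    + intros t. apply ex_derive_continuous_R. auto_derive.
      generalize (one_plus_sq_pos t). simpl. lra.
Qed.

(* 0 <= feynman x <= gauss x, since the integrand is positive and bounded by
   gauss x on [0, 1]. *)
Lemma feynman_bounds (x : R) : 0 <= feynman x <= gauss x.
Proof.
  assert (hint : ex_RInt (feynman_integrand x) 0 1).
  { apply ex_RInt_continuous_R. intros; apply feynman_integrand_continuous. }
  split.
  - apply RInt_ge_0; auto; [lra|]. intros t _. unfold feynman_integrand.
    apply Rlt_le, Rdiv_lt_0_compat; [apply exp_pos | apply one_plus_sq_pos].
  - replace (gauss x) with (RInt (fun _ => gauss x) 0 1)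
      by (rewrite RInt_const_R; to_R_eq; ring).
    apply RInt_le; [lra | exact hint | |].
    { apply ex_RInt_continuous_R. intros; apply continuous_const. }
    intros t _. unfold feynman_integrand, gauss.
    assert (hexp : exp (- (x ^ 2 * (1 + t ^ 2)) / 2) <= exp (- (x ^ 2) / 2)).
    { assert (h : - (x ^ 2 * (1 + t ^ 2)) / 2 <= - (x ^ 2) / 2) by nra.
      destruct h as [h | h]; [now apply Rlt_le, exp_increasing | now rewrite h]. }
    assert (ht : / (1 + t ^ 2) <= 1).
    { rewrite <- Rinv_1. apply Rinv_le_contravar; [lra | nra]. }
    assert (hpos := exp_pos (- (x ^ 2 * (1 + t ^ 2)) / 2)).
    assert (hinv := one_plus_sq_pos t). apply Rinv_0_lt_compat in hinv.
    unfold Rdiv at 1. nra.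
Qed.

Definition s2p : R := sqrt (2 * PI).

Lemma s2p_pos : 0 < s2p.
Proof. apply sqrt_lt_R0. generalize PI_RGT_0. lra. Qed.

Lemma s2p_sq : s2p * s2p = 2 * PI.
Proof. apply sqrt_sqrt. generalize PI_RGT_0. lra. Qed.

(* For x >= 0: gauss_int x <= s2p/2 <= gauss_int x + (4/s2p) gauss x,
   because  (s2p/2)^2 - gauss_int x ^ 2 = 2 feynman x <= 2 gauss x. *)
Lemma gauss_int_bounds (x : R) :
  0 <= x -> gauss_int x <= s2p / 2 <= gauss_int x + 4 / s2p * gauss x.
Proof.
  intros hx. assert (hG := gauss_int_nonneg x hx). assert (hid := feynman_identity x).
  assert (hH := feynman_bounds x). assert (hs := s2p_pos). assert (hs2 := s2p_sq).
  assert (hle : gauss_int x <= s2p / 2) by nra.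
  split; auto.
  apply (Rmult_le_reg_l (s2p / 2)); [lra|].
  replace (s2p / 2 * (gauss_int x + 4 / s2p * gauss x))
    with (s2p / 2 * gauss_int x + 2 * gauss x) by (field; lra).
  nra.
Qed.

Lemma gauss_lim : is_lim gauss p_infty 0.
Proof.
  apply (is_lim_comp_m exp); [apply is_lim_exp_m|].
  apply is_lim_spec. intros M. exists (2 * Rabs M + 1). intros y hy.
  generalize (Rle_abs M) (Rle_abs (- M)). rewrite Rabs_Ropp. intros. nra.
Qed.

Lemma gauss_int_lim : is_lim gauss_int p_infty (s2p / 2).
Proof.
  apply (is_lim_le_le_loc (fun x => s2p / 2 + - (4 / s2p) * gauss x) (fun _ => s2p / 2)).
  - exists 0. intros x hx. generalize (gauss_int_bounds x (Rlt_le _ _ hx)). lra.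
  - replace (Finite (s2p / 2)) with (Finite (s2p / 2 + - (4 / s2p) * 0)) by (f_equal; ring).
    apply is_lim_plus'; [apply is_lim_const|].
    apply is_lim_scal, gauss_lim.
  - apply is_lim_const.
Qed.

Definition phi (x : R) : R := / s2p * gauss x.
Definition Phi (x : R) : R := / 2 + / s2p * gauss_int x.

Lemma phi_0 : phi 0 = / s2p.
Proof. unfold phi, gauss. replace (- (0 ^ 2) / 2) with 0 by field. rewrite exp_0. ring. Qed.

Lemma Phi_0 : Phi 0 = / 2.
Proof. unfold Phi. rewrite gauss_int_0. ring. Qed.

Lemma phi_derive (x : R) : is_derive phi x (- x * phi x).
Proof.
  unfold phi, gauss. auto_derive; trivial.
  replace (- (x * (x * 1)) * / 2) with (- x ^ 2 / 2) by field.
  to_R_eq. field. apply Rgt_not_eq, s2p_pos.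
Qed.

Lemma Phi_derive (x : R) : is_derive Phi x (phi x).
Proof.
  unfold Phi. auto_derive; [eexists; apply gauss_int_derive|].
  replace (Derive (fun x => gauss_int x) x) with (gauss x)
    by (symmetry; apply is_derive_unique, gauss_int_derive).
  unfold phi. ring.
Qed.

Lemma Phi_opp (x : R) : Phi (- x) = 1 - Phi x.
Proof. unfold Phi. rewrite gauss_int_opp. field. apply Rgt_not_eq, s2p_pos. Qed.

Lemma Phi_bounds (x : R) : 0 <= Phi x <= 1.
Proof.
  assert (hs := s2p_pos).
  assert (hpos : forall y, 0 <= y -> / 2 <= Phi y <= 1).
  { intros y hy. destruct (gauss_int_bounds y hy) as [hle _].
    assert (hG := gauss_int_nonneg y hy). unfold Phi.
    assert (0 <= / s2p * gauss_int y <= / s2p * (s2p / 2)).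
    { split; apply Rmult_le_compat_l || apply Rmult_le_pos;
        auto; apply Rlt_le, Rinv_0_lt_compat; auto. }
    replace (/ s2p * (s2p / 2)) with (/ 2) in * by (field; lra). lra. }
  destruct (Rle_dec 0 x) as [hx | hx]; [generalize (hpos x hx); lra|].
  replace x with (- - x) by ring. rewrite Phi_opp. generalize (hpos (- x)). lra.
Qed.

Lemma Phi_abs_le_1 (x : R) : Rabs (Phi x) <= 1.
Proof. destruct (Phi_bounds x). rewrite Rabs_right; lra. Qed.

Lemma Phi_lim_p : is_lim Phi p_infty 1.
Proof.
  replace (Finite 1) with (Finite (/ 2 + / s2p * (s2p / 2)))
    by (f_equal; field; apply Rgt_not_eq, s2p_pos).
  apply is_lim_plus'; [apply is_lim_const|].
  apply is_lim_scal, gauss_int_lim.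
Qed.

Lemma Phi_lim_m : is_lim Phi m_infty 0.
Proof.
  apply (is_lim_ext (fun y => 1 - Phi (- y))).
  { intros y. rewrite Phi_opp. ring. }
  replace (Finite 0) with (Finite (1 + - 1)) by (f_equal; ring).
  apply is_lim_plus'; [apply is_lim_const|].
  apply (is_lim_opp (fun y => Phi (- y)) m_infty 1), is_lim_comp_opp, Phi_lim_p.
Qed.

Lemma phi_lim_p : is_lim phi p_infty 0.
Proof.
  replace (Finite 0) with (Finite (/ s2p * 0)) by (f_equal; ring).
  apply is_lim_scal, gauss_lim.
Qed.

Lemma phi_lim_m : is_lim phi m_infty 0.
Proof.
  apply (is_lim_ext (fun y => phi (- y))).
  { intros y. unfold phi, gauss. do 4 f_equal. ring. }
  apply is_lim_comp_opp, phi_lim_p.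
Qed.

Lemma phi_mult (k r s : R) : r * r = 1 + k ^ 2 -> phi (r * s) = s2p * (phi s * phi (k * s)).
Proof.
  intros hr. assert (hs := s2p_pos). unfold phi, gauss.
  replace (s2p * (/ s2p * exp (- s ^ 2 / 2) * (/ s2p * exp (- (k * s) ^ 2 / 2))))
    with (/ s2p * (exp (- s ^ 2 / 2) * exp (- (k * s) ^ 2 / 2))) by (field; lra).
  rewrite <- exp_plus. do 2 f_equal.
  replace ((r * s) ^ 2) with ((r * r) * s ^ 2) by ring. rewrite hr. field.
Qed.

Lemma Derive_Phi (x : R) : Derive (fun y => Phi y) x = phi x.
Proof. apply is_derive_unique, Phi_derive. Qed.

Lemma Derive_phi (x : R) : Derive (fun y => phi y) x = - x * phi x.
Proof. apply is_derive_unique, phi_derive. Qed.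

Ltac normal_derive :=
  auto_derive;
  repeat match goal with
  | |- _ /\ _ => split
  | |- True => exact I
  | |- ex_derive (fun y => Phi y) _ => eexists; apply Phi_derive
  | |- ex_derive (fun y => phi y) _ => eexists; apply phi_derive
  end;
  rewrite ?Derive_Phi, ?Derive_phi; unfold Rminus, Rdiv; try to_R_eq.

Lemma improper_int_antiderivatives (f h1 h2 Q1 Q2 : R -> R) (t0 L1 L2 v : R) :
  (forall t, is_derive Q1 t (h1 t)) -> (forall t, is_derive Q2 t (h2 t)) ->
  (forall t, continuous h1 t) -> (forall t, continuous h2 t) ->
  (forall t, t <= t0 -> f t = h1 t) -> (forall t, t0 <= t -> f t = h2 t) ->
  is_lim Q1 m_infty L1 -> is_lim Q2 p_infty L2 ->
  v = (Q1 t0 - L1) + (L2 - Q2 t0) ->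
  improper_int f v.
Proof.
  intros dQ1 dQ2 ch1 ch2 f1 f2 lim1 lim2 -> eps heps.
  apply is_lim_spec in lim1. apply is_lim_spec in lim2.
  destruct (lim1 (mkposreal (eps / 2) ltac:(lra))) as [M1 hM1].
  destruct (lim2 (mkposreal (eps / 2) ltac:(lra))) as [M2 hM2]. simpl in hM1, hM2.
  exists (Rabs M1 + Rabs M2 + Rabs t0 + 1). intros a b ha hb.
  generalize (Rle_abs M1) (Rle_abs (- M1)) (Rle_abs M2) (Rle_abs (- M2))
    (Rle_abs t0) (Rle_abs (- t0)). rewrite !Rabs_Ropp. intros.
  assert (int1 : is_RInt f a t0 (Q1 t0 - Q1 a)).
  { apply is_RInt_ext with h1; [|now apply is_RInt_derive_R].
    intros x hx. rewrite Rmin_left, Rmax_right in hx by lra. symmetry; apply f1; lra. }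
  assert (int2 : is_RInt f t0 b (Q2 b - Q2 t0)).
  { apply is_RInt_ext with h2; [|now apply is_RInt_derive_R].
    intros x hx. rewrite Rmin_left, Rmax_right in hx by lra. symmetry; apply f2; lra. }
  assert (int := is_RInt_Chasles _ _ _ _ _ _ int1 int2).
  exists (ex_RInt_Reals_0 _ _ _ (ex_intro _ _ int)).
  rewrite <- RInt_Reals, (is_RInt_unique_R _ _ _ _ int).
  specialize (hM1 a ltac:(lra)). specialize (hM2 b ltac:(lra)).
  unfold plus; simpl.
  replace (Q1 t0 - Q1 a + (Q2 b - Q2 t0) - (Q1 t0 - L1 + (L2 - Q2 t0)))
    with (- (Q1 a - L1) + (Q2 b - L2)) by ring.
  eapply Rle_lt_trans; [apply Rabs_triang|]. rewrite Rabs_Ropp. lra.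
Qed.

Lemma bvn_expect_ext (rho : R) (g g' : R -> R -> R) (v : R) :
  (forall s t, g s t = g' s t) -> bvn_expect rho g v -> bvn_expect rho g' v.
Proof.
  intros hg. replace g' with g; [trivial|].
  apply functional_extensionality. intros s.
  apply functional_extensionality. intros t. apply hg.
Qed.

(* Conditional law of T given S = s: normal with mean rho s and standard
   deviation sig rho; zz standardizes T. *)
Definition sig (rho : R) : R := sqrt (1 - rho ^ 2).
Definition zz (rho s t : R) : R := (t - rho * s) / sig rho.

Lemma sig_pos (rho : R) : -1 < rho < 1 -> 0 < sig rho.
Proof. intros h. apply sqrt_lt_R0. simpl. nra. Qed.

Lemma sig_sq (rho : R) : -1 < rho < 1 -> sig rho * sig rho = 1 - rho ^ 2.
Proof. intros h. apply sqrt_sqrt. simpl. nra. Qed.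

Lemma phi2_factor (rho s t : R) : -1 < rho < 1 ->
  phi2 rho s t = phi s * (/ sig rho * phi (zz rho s t)).
Proof.
  intros h. assert (hsig := sig_pos rho h). assert (hsq := sig_sq rho h).
  assert (hs := s2p_pos). assert (hs2 := s2p_sq).
  unfold phi2, phi, gauss, zz. fold (sig rho).
  replace (/ s2p * exp (- s ^ 2 / 2) *
           (/ sig rho * (/ s2p * exp (- ((t - rho * s) / sig rho) ^ 2 / 2))))
    with (/ (s2p * s2p * sig rho) *
          (exp (- s ^ 2 / 2) * exp (- ((t - rho * s) / sig rho) ^ 2 / 2)))
    by (field; lra).
  rewrite <- exp_plus, hs2. do 2 f_equal.
  replace (- ((t - rho * s) / sig rho) ^ 2 / 2)
    with (- (t - rho * s) ^ 2 / (2 * (sig rho * sig rho))) by (field; lra).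
  rewrite hsq. field. simpl. nra.
Qed.

Lemma zz_lim_p (rho s : R) (F : R -> R) (l : R) : -1 < rho < 1 ->
  is_lim F p_infty l -> is_lim (fun t => F (zz rho s t)) p_infty l.
Proof.
  intros h hF. assert (hsig := sig_pos rho h).
  apply (is_lim_ext (fun t => F (/ sig rho * t + - (rho * s) / sig rho))).
  { intros t. unfold zz. f_equal. field. lra. }
  apply (is_lim_comp_p F); auto. apply is_lim_affine_p, Rinv_0_lt_compat; auto.
Qed.

Lemma zz_lim_m (rho s : R) (F : R -> R) (l : R) : -1 < rho < 1 ->
  is_lim F m_infty l -> is_lim (fun t => F (zz rho s t)) m_infty l.
Proof.
  intros h hF. assert (hsig := sig_pos rho h).
  apply (is_lim_ext (fun t => F (/ sig rho * t + - (rho * s) / sig rho))).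
  { intros t. unfold zz. f_equal. field. lra. }
  apply (is_lim_comp_m F); auto. apply is_lim_affine_m, Rinv_0_lt_compat; auto.
Qed.

Lemma cond_cdf_derive (rho s t : R) : -1 < rho < 1 ->
  is_derive (fun t => Phi (zz rho s t)) t (/ sig rho * phi (zz rho s t)).
Proof.
  intros h. assert (hsig := sig_pos rho h). unfold zz. normal_derive.
  field. lra.
Qed.

Lemma cond_mean_derive (rho s t : R) : -1 < rho < 1 ->
  is_derive (fun t => - sig rho * phi (zz rho s t) + rho * s * Phi (zz rho s t)) t
            (t * (/ sig rho * phi (zz rho s t))).
Proof.
  intros h. assert (hsig := sig_pos rho h). unfold zz. normal_derive.
  field. lra.
Qed.

Lemma cond_density_continuous (rho s t : R) :
  continuous (fun t => / sig rho * phi (zz rho s t)) t.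
Proof. apply ex_derive_continuous_R. unfold zz. normal_derive. Qed.

Lemma inner_const (rho s c : R) : -1 < rho < 1 ->
  improper_int (fun t => c * phi2 rho s t) (c * phi s).
Proof.
  intros h. set (q := fun t => c * phi s * Phi (zz rho s t)).
  set (dq := fun t => c * phi s * (/ sig rho * phi (zz rho s t))).
  assert (hq : forall t, is_derive q t (dq t)).
  { intros t. apply is_derive_scal, cond_cdf_derive, h. }
  assert (hdq : forall t, continuous dq t).
  { intros t. apply (continuous_scal_r (K := R_AbsRing) (V := R_NormedModule)).
    apply cond_density_continuous. }
  assert (hf : forall t, c * phi2 rho s t = dq t).
  { intros t. unfold dq. rewrite phi2_factor by exact h. ring. }
  apply (improper_int_antiderivatives _ dq dq q q 0 0 (c * phi s * 1)); auto.
  - replace (Finite 0) with (Finite (c * phi s * 0)) by (f_equal; ring).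
    apply is_lim_scal, zz_lim_m, Phi_lim_m; exact h.
  - apply is_lim_scal, zz_lim_p, Phi_lim_p; exact h.
  - ring.
Qed.

(* Conditional expectation of max(c, b T) given S = s (times the density of
   S), for b > 0: with z the standardized threshold c / b,
   E[max(c, bT) | S = s] = c P(T <= c/b) + b E[T; T > c/b]. *)
Definition cond_max (rho b c s : R) : R :=
  let z := zz rho s (c / b) in
  phi s * (c * Phi z + b * sig rho * phi z + b * rho * s * (1 - Phi z)).

Lemma inner_max (rho b c s : R) : -1 < rho < 1 -> 0 < b ->
  improper_int (fun t => Rmax c (b * t) * phi2 rho s t) (cond_max rho b c s).
Proof.
  intros h hb.
  set (q1 := fun t => c * phi s * Phi (zz rho s t)).
  set (q2 := fun t => b * phi s *
                      (- sig rho * phi (zz rho s t) + rho * s * Phi (zz rho s t))).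
  apply (improper_int_antiderivatives _
    (fun t => c * phi s * (/ sig rho * phi (zz rho s t)))
    (fun t => b * phi s * (t * (/ sig rho * phi (zz rho s t))))
    q1 q2 (c / b) 0 (b * phi s * (- sig rho * 0 + rho * s * 1))).
  - intros t. apply is_derive_scal, cond_cdf_derive, h.
  - intros t. apply is_derive_scal, cond_mean_derive, h.
  - intros t. apply (continuous_scal_r (K := R_AbsRing) (V := R_NormedModule)).
    apply cond_density_continuous.
  - intros t. apply ex_derive_continuous_R. unfold zz. normal_derive.
  - intros t ht. rewrite phi2_factor, Rmax_left by (auto; apply Rle_div_r in ht; lra).
    ring.
  - intros t ht. rewrite phi2_factor, Rmax_right by (auto; apply Rle_div_l in ht; lra).
    ring.
  - replace (Finite 0) with (Finite (c * phi s * 0)) by (f_equal; ring).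
    apply is_lim_scal, zz_lim_m, Phi_lim_m; exact h.
  - apply is_lim_scal, is_lim_plus'; apply is_lim_scal.
    + apply zz_lim_p, phi_lim_p; exact h.
    + apply zz_lim_p, Phi_lim_p; exact h.
  - unfold cond_max, q1, q2. simpl. ring.
Qed.

(* After conditioning, every integrand in s is, on each
   half-line, of the form
     owen al be ta k s = phi s * (al s Phi(k s) + be s + ta phi(k s)).
   With r = sqrt(1 + k^2) it has the explicit antiderivative owen_prim,
   because phi s * phi (k s) = phi (r s) / s2p (lemma phi_mult). *)
Definition owen (al be ta k s : R) : R :=
  phi s * (al * s * Phi (k * s) + be * s + ta * phi (k * s)).

Definition owen_prim (al be ta k r s : R) : R :=
  al * (- phi s * Phi (k * s) + k / (r * s2p) * Phi (r * s))
  - be * phi s + ta / (r * s2p) * Phi (r * s).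

Lemma owen_prim_derive (al be ta k r s : R) : 0 < r -> r * r = 1 + k ^ 2 ->
  is_derive (owen_prim al be ta k r) s (owen al be ta k s).
Proof.
  intros hr hrk. assert (hs := s2p_pos). unfold owen_prim, owen. normal_derive.
  rewrite (phi_mult k r s hrk). field. lra.
Qed.

Lemma owen_continuous (al be ta k s : R) : continuous (owen al be ta k) s.
Proof. apply ex_derive_continuous_R. unfold owen. normal_derive. Qed.

Lemma owen_prim_decomp (al be ta k r s : R) :
  owen_prim al be ta k r s
  = al * (phi s * Phi (k * s) * -1)
    + (al * (k / (r * s2p)) + ta / (r * s2p)) * Phi (r * s + 0) + - be * phi s.
Proof. unfold owen_prim. rewrite Rplus_0_r. ring. Qed.

Lemma phi_Phi_lim (k : R) (x : Rbar) :
  is_lim phi x 0 -> is_lim (fun s => phi s * Phi (k * s) * -1) x 0.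
Proof.
  intros hphi. replace (Finite 0) with (Finite (-1 * 0)) by (f_equal; ring).
  apply (is_lim_ext (fun s => -1 * (phi s * Phi (k * s)))); [intros; ring|].
  apply is_lim_scal, is_lim_mult_bounded; [exact hphi | intros; apply Phi_abs_le_1].
Qed.

Lemma owen_prim_lim_m (al be ta k r : R) : 0 < r ->
  is_lim (owen_prim al be ta k r) m_infty 0.
Proof.
  intros hr. apply (is_lim_ext _ _ _ _ (fun s => eq_sym (owen_prim_decomp al be ta k r s))).
  replace (Finite 0)
    with (Finite (al * 0 + (al * (k / (r * s2p)) + ta / (r * s2p)) * 0 + - be * 0))
    by (f_equal; ring).
  apply is_lim_plus'; [apply is_lim_plus'|]; apply is_lim_scal.
  - apply phi_Phi_lim, phi_lim_m.
  - apply (is_lim_comp_m Phi); [apply Phi_lim_m | apply is_lim_affine_m, hr].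
  - apply phi_lim_m.
Qed.

Lemma owen_prim_lim_p (al be ta k r : R) : 0 < r ->
  is_lim (owen_prim al be ta k r) p_infty ((al * k + ta) / (r * s2p)).
Proof.
  intros hr. assert (hs := s2p_pos).
  apply (is_lim_ext _ _ _ _ (fun s => eq_sym (owen_prim_decomp al be ta k r s))).
  replace ((al * k + ta) / (r * s2p))
    with (al * 0 + (al * (k / (r * s2p)) + ta / (r * s2p)) * 1 + - be * 0)
    by (field; lra).
  apply is_lim_plus'; [apply is_lim_plus'|]; apply is_lim_scal.
  - apply phi_Phi_lim, phi_lim_p.
  - apply (is_lim_comp_p Phi); [apply Phi_lim_p | apply is_lim_affine_p, hr].
  - apply phi_lim_p.
Qed.

Lemma owen_glue (f : R -> R) (al0 be0 ta0 k0 r0 al1 be1 ta1 k1 r1 : R) :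
  0 < r0 -> r0 * r0 = 1 + k0 ^ 2 -> 0 < r1 -> r1 * r1 = 1 + k1 ^ 2 ->
  (forall s, s <= 0 -> f s = owen al0 be0 ta0 k0 s) ->
  (forall s, 0 <= s -> f s = owen al1 be1 ta1 k1 s) ->
  improper_int f ((al1 - al0) / (2 * s2p) + (be1 - be0) / s2p
                  + (al0 * k0 + ta0) / (2 * r0 * s2p) + (al1 * k1 + ta1) / (2 * r1 * s2p)).
Proof.
  intros hr0 hrk0 hr1 hrk1 f0 f1. assert (hs := s2p_pos).
  apply (improper_int_antiderivatives f (owen al0 be0 ta0 k0) (owen al1 be1 ta1 k1)
    (owen_prim al0 be0 ta0 k0 r0) (owen_prim al1 be1 ta1 k1 r1) 0 0
    ((al1 * k1 + ta1) / (r1 * s2p)));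
    auto using owen_prim_derive, owen_continuous, owen_prim_lim_m, owen_prim_lim_p.
  unfold owen_prim. rewrite !Rmult_0_r, phi_0, Phi_0. field. lra.
Qed.

Lemma bvn_pos_part (rho a : R) : -1 < rho < 1 -> 0 <= a ->
  bvn_expect rho (fun s t => Rmax (a * s) 0) (a / s2p).
Proof.
  intros h ha. assert (hs := s2p_pos).
  exists (fun s => Rmax (a * s) 0 * phi s). split.
  - intros s. apply inner_const, h.
  - replace (a / s2p) with ((0 - 0) / (2 * s2p) + (a - 0) / s2p
                            + (0 * 0 + 0) / (2 * 1 * s2p) + (0 * 0 + 0) / (2 * 1 * s2p))
      by (field; lra).
    apply owen_glue; try lra.
    + intros s hs0. rewrite Rmax_right by nra. unfold owen. ring.
    + intros s hs0. rewrite Rmax_left by nra. unfold owen. ring.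
Qed.

(* The conditional expectation of max(a S, b T, 0) given S = s is an owen
   integrand on each half-line: the threshold zz s (max(a s, 0) / b) is
   linear in s on s <= 0 and on s >= 0. *)
Lemma cond_max_owen_neg (rho a b s : R) : -1 < rho < 1 -> 0 < b -> s <= 0 -> 0 <= a ->
  cond_max rho b (Rmax (a * s) 0) s
  = owen (- (b * rho)) (b * rho) (b * sig rho) (- rho / sig rho) s.
Proof.
  intros h hb hs ha. assert (hsig := sig_pos rho h).
  unfold cond_max, owen. rewrite Rmax_right by nra.
  replace (zz rho s (0 / b)) with (- rho / sig rho * s) by (unfold zz; field; lra).
  ring.
Qed.

Lemma cond_max_owen_pos (rho a b s : R) : -1 < rho < 1 -> 0 < b -> 0 <= s -> 0 <= a ->
  cond_max rho b (Rmax (a * s) 0) s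
  = owen (a - b * rho) (b * rho) (b * sig rho) ((a / b - rho) / sig rho) s.
Proof.
  intros h hb hs ha. assert (hsig := sig_pos rho h).
  unfold cond_max, owen. rewrite Rmax_left by nra.
  replace (zz rho s (a * s / b)) with ((a / b - rho) / sig rho * s)
    by (unfold zz; field; lra).
  ring.
Qed.

Definition qform (rho a b : R) : R := a ^ 2 - 2 * rho * a * b + b ^ 2.

Lemma qform_decomp (rho a b : R) : -1 < rho < 1 ->
  qform rho a b = (a - b * rho) ^ 2 + (b * sig rho) ^ 2.
Proof.
  intros h. unfold qform.
  replace ((b * sig rho) ^ 2) with (b ^ 2 * (sig rho * sig rho)) by ring.
  rewrite (sig_sq rho h). ring.
Qed.

Lemma owen_neg_params (rho b : R) : -1 < rho < 1 ->
  / sig rho * / sig rho = 1 + (- rho / sig rho) ^ 2 /\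
  (- (b * rho) * (- rho / sig rho) + b * sig rho) / (2 * / sig rho * s2p) = b / (2 * s2p).
Proof.
  intros h. assert (hsig := sig_pos rho h). assert (hsq := sig_sq rho h).
  assert (hs := s2p_pos). split.
  - replace (1 + (- rho / sig rho) ^ 2) with ((sig rho * sig rho + rho ^ 2) * (/ sig rho * / sig rho))
      by (field; lra).
    rewrite hsq. ring.
  - replace (- (b * rho) * (- rho / sig rho) + b * sig rho)
      with (b * (rho ^ 2 + sig rho * sig rho) / sig rho) by (field; lra).
    rewrite hsq. field. lra.
Qed.

Lemma owen_pos_params (rho a b : R) : -1 < rho < 1 -> 0 < b ->
  let D := sqrt (qform rho a b) in
  0 < D / (b * sig rho) /\
  D / (b * sig rho) * (D / (b * sig rho)) = 1 + ((a / b - rho) / sig rho) ^ 2 /\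
  ((a - b * rho) * ((a / b - rho) / sig rho) + b * sig rho) / (2 * (D / (b * sig rho)) * s2p)
  = D / (2 * s2p).
Proof.
  intros h hb D. assert (hsig := sig_pos rho h). assert (hs := s2p_pos).
  assert (hQ := qform_decomp rho a b h).
  assert (hQpos : 0 < qform rho a b).
  { rewrite hQ. generalize (pow2_ge_0 (a - b * rho)) (pow_lt (b * sig rho) 2 ltac:(nra)). lra. }
  assert (hD : 0 < D) by (apply sqrt_lt_R0, hQpos).
  assert (hDD : D * D = qform rho a b) by (apply sqrt_sqrt; lra).
  split; [|split].
  - apply Rdiv_lt_0_compat; [lra | nra].
  - replace (1 + ((a / b - rho) / sig rho) ^ 2)
      with (((a - b * rho) ^ 2 + (b * sig rho) ^ 2) / ((b * sig rho) * (b * sig rho)))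
      by (field; lra).
    rewrite <- hQ, <- hDD. field. lra.
  - replace ((a - b * rho) * ((a / b - rho) / sig rho) + b * sig rho)
      with (((a - b * rho) ^ 2 + (b * sig rho) ^ 2) / (b * sig rho)) by (field; lra).
    rewrite <- hQ, <- hDD. field. lra.
Qed.

Lemma bvn_max (rho a b : R) : -1 < rho < 1 -> 0 <= a -> 0 < b ->
  bvn_expect rho (fun s t => Rmax (Rmax (a * s) (b * t)) 0)
    ((a + b + sqrt (qform rho a b)) / (2 * s2p)).
Proof.
  intros h ha hb. assert (hs := s2p_pos).
  destruct (owen_neg_params rho b h) as [hr0 e0].
  destruct (owen_pos_params rho a b h hb) as [hr1pos [hr1 e1]].
  apply (bvn_expect_ext _ (fun s t => Rmax (Rmax (a * s) 0) (b * t))).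
  { intros s t. unfold Rmax. repeat destruct Rle_dec; lra. }
  exists (fun s => cond_max rho b (Rmax (a * s) 0) s). split.
  - intros s. apply inner_max; auto.
  - set (D := sqrt (qform rho a b)) in *. set (sg := sig rho) in *.
    replace ((a + b + D) / (2 * s2p))
      with ((a - b * rho - - (b * rho)) / (2 * s2p) + (b * rho - b * rho) / s2p
            + (- (b * rho) * (- rho / sg) + b * sg) / (2 * / sg * s2p)
            + ((a - b * rho) * ((a / b - rho) / sg) + b * sg) / (2 * (D / (b * sg)) * s2p))
      by (rewrite e0, e1; field; lra).
    apply owen_glue; auto.
    + apply Rinv_0_lt_compat, sig_pos, h.
    + intros s hs0. apply cond_max_owen_neg; auto.
    + intros s hs0. apply cond_max_owen_pos; auto.
Qed.

Lemma qform_scale (rho c a b : R) : qform rho (a * c) (b * c) = c ^ 2 * qform rho a b.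
Proof. unfold qform. ring. Qed.

Lemma pickands_radicand (rho x y : R) : 0 < x + y ->
  sqrt (1 - 2 * (rho + 1) * (x * y / (x + y) ^ 2)) = sqrt (qform rho x y) / (x + y).
Proof.
  intros hxy.
  replace (1 - 2 * (rho + 1) * (x * y / (x + y) ^ 2)) with (qform rho x y / (x + y) ^ 2)
    by (unfold qform; field; lra).
  rewrite sqrt_div_alt, sqrt_pow2; [reflexivity | lra | apply pow_lt, hxy].
Qed.

Lemma tail_dependence (rho x y : R) : -1 < rho < 1 -> 0 <= x -> 0 <= y -> 0 < x + y ->
  bvn_expect rho
    (fun s t => Rmax (Rmax (x * (sqrt (2 * PI) * s)) (y * (sqrt (2 * PI) * t))) 0)
    (/ 2 * (x + y) * (1 + sqrt (1 - 2 * (rho + 1) * (x * y / (x + y) ^ 2)))).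
Proof.
  intros h hx hy hxy. fold s2p. assert (hs := s2p_pos).
  rewrite pickands_radicand by exact hxy.
  destruct (Req_dec y 0) as [-> | hy0].
  - apply (bvn_expect_ext _ (fun s t => Rmax (x * s2p * s) 0)).
    { intros s t. rewrite Rmult_0_l. unfold Rmax. repeat destruct Rle_dec; nra. }
    replace (/ 2 * (x + 0) * (1 + sqrt (qform rho x 0) / (x + 0))) with (x * s2p / s2p).
    + apply bvn_pos_part; [exact h | nra].
    + replace (qform rho x 0) with (x ^ 2) by (unfold qform; ring).
      rewrite sqrt_pow2 by exact hx. field. lra.
  - apply (bvn_expect_ext _ (fun s t => Rmax (Rmax (x * s2p * s) (y * s2p * t)) 0)).
    { intros s t. rewrite !Rmult_assoc. reflexivity. }
    replace (/ 2 * (x + y) * (1 + sqrt (qform rho x y) / (x + y)))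
      with ((x * s2p + y * s2p + sqrt (qform rho (x * s2p) (y * s2p))) / (2 * s2p)).
    + apply bvn_max; [exact h | nra | nra].
    + rewrite qform_scale, sqrt_mult_alt, sqrt_pow2 by (auto using pow2_ge_0; lra).
      field. lra.
Qed.

Theorem mainTheorem10 (rho : R) (hrho : -1 < rho < 1) :
  bvn_expect rho (fun s t => Rmax (sqrt (2 * PI) * s) 0) 1 /\
  bvn_expect rho (fun s t => Rmax (sqrt (2 * PI) * t) 0) 1 /\
  (forall x y : R, 0 <= x -> 0 <= y -> 0 < x + y ->
     bvn_expect rho
       (fun s t => Rmax (Rmax (x * (sqrt (2 * PI) * s)) (y * (sqrt (2 * PI) * t))) 0)
       (/ 2 * (x + y) *
        (1 + sqrt (1 - 2 * (rho + 1) * (x * y / (x + y) ^ 2))))) /\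
  (forall t : R, 0 <= t <= 1 ->
     bvn_expect rho
       (fun s u => Rmax (Rmax ((1 - t) * (sqrt (2 * PI) * s)) (t * (sqrt (2 * PI) * u))) 0)
       (/ 2 * (1 + sqrt (1 - 2 * (rho + 1) * t * (1 - t))))).
Proof.
  assert (hs := s2p_pos). fold s2p.
  split; [|split; [|split]].
  -
    replace 1 with (s2p / s2p) by (field; lra). apply bvn_pos_part; lra.
  -
    assert (hl := tail_dependence rho 0 1 hrho ltac:(lra) ltac:(lra) ltac:(lra)).
    fold s2p in hl.
    replace (/ 2 * (0 + 1) * (1 + sqrt (1 - 2 * (rho + 1) * (0 * 1 / (0 + 1) ^ 2)))) with 1
      in hl by (replace (1 - 2 * (rho + 1) * (0 * 1 / (0 + 1) ^ 2)) with 1 by field;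
                rewrite sqrt_1; field).
    revert hl. apply bvn_expect_ext. intros s u.
    rewrite Rmult_0_l, Rmult_1_l. unfold Rmax. repeat destruct Rle_dec; lra.
  - intros x y. apply tail_dependence, hrho.
  -
    intros t ht. assert (hl := tail_dependence rho (1 - t) t hrho ltac:(lra) ltac:(lra) ltac:(lra)).
    fold s2p in hl.
    replace (1 - t + t) with 1 in hl by ring.
    replace (1 - 2 * (rho + 1) * ((1 - t) * t / 1 ^ 2)) with (1 - 2 * (rho + 1) * t * (1 - t))
      in hl by field.
    now rewrite Rmult_1_r in hl.
Qed.
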